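(* Let $A=(a_{ij})\in\mathcal{B}^{m,n}$ and let $k$ be a field. Let $k[A]=k[x_{ij} : a_{ij}=1]$, let $A[x]$ be the matrix over $k[A]$ with $A[x]_{ij}=x_{ij}$ if $a_{ij}=1$ and $0$ otherwise, and let $I_2(A[x])$ be the ideal of $k[A]$ generated by the $2\times2$ minors of $A[x]$. Let $\Delta_A$ be the simplicial complex on the vertex set $\{a_{ij} : a_{ij}=1\}$ whose faces are the isolated sets of $A$, and let $I_{\Delta_A}\subseteq k[A]$ be its Stanley–Reisner ideal, i.e. the ideal generated by the monomials $\prod_{a_{ij}\in S}x_{ij}$ for all subsets $S$ of the vertices with $S\notin\Delta_A$. Then \[ I_{\Delta_A}=\big(x_{ij}x_{k\ell} : (i,j)\neq(k,\ell),\ a_{ij}=a_{k\ell}=1,\ x_{ij}x_{k\ell}\notin I_2(A[x])\big). \]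
   Context: $\mathcal{B}^{m,n}$ denotes $m\times n$ matrices with entries in the Boolean semiring $\{0,1\}$ with $\vee$ (or), $\wedge$ (and). A pair of entries $\{a_{ij},a_{k\ell}\}$ is isolated if $a_{ij}=a_{k\ell}=1$ and $a_{i\ell}\wedge a_{kj}=0$. A subset $T$ of the entries of $A$ equal to $1$ is an isolated set if it has size one or every pair of its elements is isolated (the empty set is also a face of $\Delta_A$). *)

From HB Require Import structures.
From mathcomp Require Import all_boot all_order all_algebra.
From mathcomp Require Import mpoly.
Set Implicit Arguments. Unset Strict Implicit. Unset Printing Implicit Defensive.
Import GRing.Theory.
Local Open Scope ring_scope.

(* Boolean matrices B^{m,n} are 'M[bool]_(m,n); entry a_ij = 1 iff A i j = true. *)

Definition Vert (m n : nat) (A : 'M[bool]_(m, n)) : finType :=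
  {p : 'I_m * 'I_n | A p.1 p.2}.

(* k[A] = k[x_ij : a_ij = 1]: variables indexed by the vertices (via enum_rank). *)
Definition kA (k : fieldType) (m n : nat) (A : 'M[bool]_(m, n)) :=
  {mpoly k[#|Vert A|]}.

Definition xv (k : fieldType) (m n : nat) (A : 'M[bool]_(m, n)) (v : Vert A)
  : kA k A := 'X_(enum_rank v).

Definition Ax (k : fieldType) (m n : nat) (A : 'M[bool]_(m, n))
  : 'M[kA k A]_(m, n) :=
  \matrix_(i, j) match (insub (i, j) : option (Vert A)) with
                 | Some v => xv k v
                 | None => 0
                 end.

Definition in_ideal (R : comRingType) (G : R -> Prop) (p : R) : Prop :=
  exists s : seq (R * R), (forall c, c \in s -> G c.2) /\
                          p = \sum_(c <- s) c.1 * c.2.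

Definition minors2 (k : fieldType) (m n : nat) (A : 'M[bool]_(m, n))
  (p : kA k A) : Prop :=
  exists (i1 i2 : 'I_m) (j1 j2 : 'I_n), (i1 < i2)%N /\ (j1 < j2)%N /\
    p = Ax k A i1 j1 * Ax k A i2 j2 - Ax k A i1 j2 * Ax k A i2 j1.

Definition isolated_pair (m n : nat) (A : 'M[bool]_(m, n)) (v w : Vert A) : bool :=
  let: (i, j) := val v in let: (k, l) := val w in ~~ (A i l && A k j).

(* isolated set: size one, or every pair of (distinct) elements isolated;
   the empty set is included as well *)
Definition isolated_set (m n : nat) (A : 'M[bool]_(m, n)) (T : {set Vert A}) : bool :=
  (#|T| <= 1)%N || [forall v in T, forall w in T, (v != w) ==> isolated_pair v w].

Definition SR_gens (k : fieldType) (m n : nat) (A : 'M[bool]_(m, n))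
  (p : kA k A) : Prop :=
  exists S : {set Vert A}, ~~ isolated_set S /\ p = \prod_(v in S) xv k v.

Definition quad_gens (k : fieldType) (m n : nat) (A : 'M[bool]_(m, n))
  (p : kA k A) : Prop :=
  exists v w : Vert A, v != w /\ ~ in_ideal (@minors2 k m n A) (xv k v * xv k w)
                       /\ p = xv k v * xv k w.

From HB Require Import structures.
From mathcomp Require Import all_boot all_order all_algebra.
From mathcomp Require Import mpoly.
Set Implicit Arguments. Unset Strict Implicit. Unset Printing Implicit Defensive.
Import GRing.Theory.
Local Open Scope ring_scope.

(* A set of vertices is a non-face exactly when it contains a non-isolated
   pair, so both ideals are generated by the quadratics x_v x_w of the
   non-isolated pairs once we know that, for v = (i,j) and w = (k,l),
   x_v x_w lies in I_2(A[x]) iff {v, w} is isolated.  If it is, the cross term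
   x_il x_kj of the minor on rows {i,k} and columns {j,l} vanishes, so x_v x_w
   is that minor up to sign.  If not, a_il = a_kj = 1, and sending x_u to 1 on
   the rectangle {i,k} x {j,l} and to 0 elsewhere maps A[x] to a rank-one 0/1
   matrix: this kills every 2x2 minor but not x_v x_w. *)

Section IdealGeneration.
Variable R : comNzRingType.
Implicit Type G H : R -> Prop.

Lemma in_ideal_gen G g : G g -> in_ideal G g.
Proof.
by move=> Gg; exists [:: (1, g)]; rewrite big_seq1 mul1r; split => // c /[!inE] /eqP ->.
Qed.

Lemma in_idealD G p q : in_ideal G p -> in_ideal G q -> in_ideal G (p + q).
Proof.
move=> [s [Gs ->]] [t [Gt ->]]; exists (s ++ t); rewrite big_cat; split => // c.
by rewrite mem_cat => /orP[/Gs|/Gt].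
Qed.

Lemma in_idealMl G r p : in_ideal G p -> in_ideal G (r * p).
Proof.
move=> [s [Gs ->]]; exists [seq (r * c.1, c.2) | c <- s]; split.
  by move=> _ /mapP[c cs ->] /=; apply: Gs.
by rewrite big_map mulr_sumr; apply: eq_bigr => c _; rewrite mulrA.
Qed.

Lemma in_idealN G p : in_ideal G p -> in_ideal G (- p).
Proof. by rewrite -mulN1r; apply: in_idealMl. Qed.

Lemma in_ideal_dvd_gens G H p :
  (forall g, G g -> exists r h, H h /\ g = r * h) ->
  in_ideal G p -> in_ideal H p.
Proof.
move=> GH [s [Gs ->]]; elim: s Gs => [|c s IHs] Gs.
  by exists [::]; rewrite !big_nil.
rewrite big_cons; apply: in_idealD; last first.
  by apply: IHs => d ds; apply: Gs; rewrite inE ds orbT.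
have [r [h [Hh ->]]] := GH _ (Gs c (mem_head _ _)).
by rewrite mulrA; apply/in_idealMl/in_ideal_gen.
Qed.

Lemma in_ideal_rmorph_eq0 G (S : comNzRingType) (f : {rmorphism R -> S}) p :
  (forall g, G g -> f g = 0) -> in_ideal G p -> f p = 0.
Proof.
move=> fG [s [Gs ->]]; rewrite rmorph_sum big1_seq // => c cs.
by rewrite rmorphM (fG c.2) ?mulr0 //; apply: Gs.
Qed.

End IdealGeneration.

Section IsolatedPairs.
Variables (k : fieldType) (m n : nat) (A : 'M[bool]_(m, n)).

Lemma isolated_pairC (v w : Vert A) : isolated_pair v w = isolated_pair w v.
Proof. by case: v w => [[i j] ?] [[i' j'] ?]; rewrite /isolated_pair /= andbC. Qed.

Lemma isolated_set2 (v w : Vert A) :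
  v != w -> isolated_set [set v; w] = isolated_pair v w.
Proof.
move=> vw; rewrite /isolated_set cards2 vw /=.
apply/forall_inP/idP => [iso | vw_iso u].
  by move/forall_inP: (iso v (set21 v w)) => /(_ w (set22 v w)); rewrite vw.
rewrite !inE => /orP[] /eqP -> /=; apply/forall_inP => u'; rewrite !inE;
  case/orP=> /eqP ->; rewrite ?eqxx ?vw_iso ?implybT //.
by rewrite isolated_pairC vw_iso implybT.
Qed.

Lemma not_isolated_setP (S : {set Vert A}) :
  ~~ isolated_set S ->
  exists v w, [/\ v \in S, w \in S, v != w & ~~ isolated_pair v w].
Proof.
rewrite negb_or => /andP[_ /forall_inPn[v vS /forall_inPn[w wS]]].
by rewrite negb_imply => /andP[vw not_iso]; exists v, w.
Qed.

Lemma AxE (v : Vert A) : Ax k A (val v).1 (val v).2 = xv k v.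
Proof. by rewrite mxE -surjective_pairing valK. Qed.

Lemma Ax0 i j : ~~ A i j -> Ax k A i j = 0.
Proof. by move=> /negbTE Aij; rewrite mxE insubF. Qed.

Definition minor2 (i1 i2 : 'I_m) (j1 j2 : 'I_n) : kA k A :=
  Ax k A i1 j1 * Ax k A i2 j2 - Ax k A i1 j2 * Ax k A i2 j1.

Lemma minor2_swap_rows i1 i2 j1 j2 : minor2 i2 i1 j1 j2 = - minor2 i1 i2 j1 j2.
Proof. by rewrite /minor2 opprB [Ax k A i2 _ * _]mulrC [X in _ - X]mulrC. Qed.

Lemma minor2_swap_cols i1 i2 j1 j2 : minor2 i1 i2 j2 j1 = - minor2 i1 i2 j1 j2.
Proof. by rewrite /minor2 opprB. Qed.

Lemma minor2_in_I2 i1 i2 j1 j2 :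
  i1 != i2 -> j1 != j2 -> in_ideal (@minors2 k m n A) (minor2 i1 i2 j1 j2).
Proof.
wlog lt_i : i1 i2 / (i1 < i2)%N => [gen ne_i ne_j|].
  case: (ltngtP i1 i2) => [lt_i|lt_i|/val_inj eq_i]; first exact: gen.
    rewrite -[minor2 _ _ _ _]opprK -minor2_swap_rows.
    by apply/in_idealN/gen; rewrite // eq_sym.
  by rewrite eq_i eqxx in ne_i.
wlog lt_j : j1 j2 / (j1 < j2)%N => [gen ne_i ne_j|].
  case: (ltngtP j1 j2) => [lt_j|lt_j|/val_inj eq_j]; first exact: gen.
    rewrite -[minor2 _ _ _ _]opprK -minor2_swap_cols.
    by apply/in_idealN/gen; rewrite // eq_sym.
  by rewrite eq_j eqxx in ne_j.
by move=> _ _; apply: in_ideal_gen; exists i1, i2, j1, j2.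
Qed.

Lemma isolated_pair_in_I2 (v w : Vert A) :
  isolated_pair v w -> in_ideal (@minors2 k m n A) (xv k v * xv k w).
Proof.
rewrite -(AxE v) -(AxE w); case: v w => [[i j] /= Av] [[i' j'] /= Aw].
rewrite /isolated_pair /= => iso.
have cross0 : Ax k A i j' * Ax k A i' j = 0.
  by case/nandP: iso => /Ax0->; rewrite ?mul0r ?mulr0.
have ne_i : i != i'.
  by apply: contraNneq iso => eq_i; rewrite -eq_i in Aw *; rewrite Av Aw.
have ne_j : j != j'.
  by apply: contraNneq iso => eq_j; rewrite -eq_j in Aw *; rewrite Av Aw.
suff -> : Ax k A i j * Ax k A i' j' = minor2 i i' j j' by exact: minor2_in_I2.
by rewrite /minor2 cross0 subr0.
Qed.

Lemma meval_Ax (P : pred ('I_m * 'I_n)) i j :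
  meval (fun r => (P (val (enum_val r)))%:R) (Ax k A i j) = (A i j && P (i, j))%:R.
Proof.
rewrite mxE; case: insubP => [u /= Aij <-|/negbTE ->]; last by rewrite meval0.
by rewrite mevalXU enum_rankK Aij.
Qed.

Lemma not_isolated_pair_notin_I2 (v w : Vert A) :
  ~~ isolated_pair v w -> ~ in_ideal (@minors2 k m n A) (xv k v * xv k w).
Proof.
case: v w => [[i j] /= Av] [[i' j'] /= Aw].
rewrite /isolated_pair /= negbK => /andP[Ajl Akj].
pose rows (a : 'I_m) := (a == i) || (a == i').
pose cols (b : 'I_n) := (b == j) || (b == j').
pose P := [pred u : 'I_m * 'I_n | rows u.1 && cols u.2].
pose e (r : 'I_#|Vert A|) : k := (P (val (enum_val r)))%:R.
have ev_Ax a b : meval e (Ax k A a b) = (rows a && cols b)%:R.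
  rewrite meval_Ax /=; case ra: (rows a); case cb: (cols b); rewrite ?andbF //=.
  move: ra cb; rewrite andbT /rows /cols => /orP[]/eqP-> /orP[]/eqP->;
  by rewrite ?Av ?Aw ?Ajl ?Akj.
have ev_minors2 g : minors2 g -> meval e g = 0.
  move=> [i1 [i2 [j1 [j2 [_ [_ ->]]]]]].
  rewrite rmorphB !rmorphM /= !ev_Ax -!natrM -!mulnb.
  by case: (rows i1); case: (rows i2); case: (cols j1); case: (cols j2); rewrite subrr.
move=> /(in_ideal_rmorph_eq0 ev_minors2)/eqP; apply/negP.
rewrite rmorphM /= /xv !mevalXU /e !enum_rankK /P /rows /cols /= !eqxx ?orbT.
by rewrite mulr1 oner_eq0.
Qed.

Lemma quadratic_in_I2 (v w : Vert A) :
  in_ideal (@minors2 k m n A) (xv k v * xv k w) <-> isolated_pair v w.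
Proof.
split; last exact: isolated_pair_in_I2.
by move=> inI2; apply/negPn/negP => /not_isolated_pair_notin_I2; apply.
Qed.

End IsolatedPairs.

Theorem corollary4p15 (k : fieldType) (m n : nat) (A : 'M[bool]_(m, n))
  (p : kA k A) :
  in_ideal (@SR_gens k m n A) p <-> in_ideal (@quad_gens k m n A) p.
Proof.
split; apply: in_ideal_dvd_gens => g.
- move=> [S [/not_isolated_setP[v [w [vS wS vw not_iso]]] ->]].
  exists (\prod_(u in S :\ v :\ w) xv k u), (xv k v * xv k w); split.
    by exists v, w; split => //; split => // /quadratic_in_I2; apply/negP.
  rewrite (bigD1 v) //= (bigD1 w) /=; last by rewrite wS eq_sym vw.
  rewrite mulrA mulrC; congr (_ * _); apply: eq_bigl => u.
  by rewrite !inE andbC (andbC (u \in S)).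
- move=> [v [w [vw [notinI2 ->]]]].
  exists 1, (xv k v * xv k w); rewrite mul1r; split => //.
  exists [set v; w]; rewrite big_setU1 ?inE //= big_set1; split => //.
  by rewrite isolated_set2 //; apply/negP => /quadratic_in_I2.
Qed.
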